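(* Every $2$-connected graph that contains no induced subgraph isomorphic to $P_4$ and no induced subgraph isomorphic to $2K_2$ is cummerbund covered.
   Context: All graphs are finite and simple. $P_4$ is the path on $4$ vertices and $2K_2$ is the graph consisting of two vertex-disjoint edges. A cummerbund of a graph is a longest cycle in it; a graph is cummerbund covered if every vertex lies in some cummerbund. *)

From mathcomp Require Import all_boot.
Set Implicit Arguments. Unset Strict Implicit. Unset Printing Implicit Defensive.

Definition simple_graph (T : finType) (e : rel T) : Prop :=
  symmetric e /\ irreflexive e.

Definition connected_graph (T : finType) (e : rel T) : Prop :=
  forall x y : T, connect e x y.

Definition del_vertex (T : finType) (e : rel T) (v : T) : rel T :=
  [rel x y | [&& x != v, y != v & e x y]].

Definition two_connected (T : finType) (e : rel T) : Prop :=
  2 < #|T| /\ connected_graph e /\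
  forall v x y : T, x != v -> y != v -> connect (del_vertex e v) x y.

Definition has_induced_P4 (T : finType) (e : rel T) : Prop :=
  exists a b c d : T, uniq [:: a; b; c; d] /\
    [&& e a b, e b c, e c d, ~~ e a c, ~~ e b d & ~~ e a d].

Definition has_induced_2K2 (T : finType) (e : rel T) : Prop :=
  exists a b c d : T, uniq [:: a; b; c; d] /\
    [&& e a b, e c d, ~~ e a c, ~~ e a d, ~~ e b c & ~~ e b d].

Definition is_graph_cycle (T : finType) (e : rel T) (c : seq T) : Prop :=
  [/\ 2 < size c, uniq c & cycle e c].

Definition cummerbund (T : finType) (e : rel T) (c : seq T) : Prop :=
  is_graph_cycle e c /\ forall c', is_graph_cycle e c' -> size c' <= size c.

Definition cummerbund_covered (T : finType) (e : rel T) : Prop :=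
  forall v : T, exists c, cummerbund e c /\ v \in c.

(* Let C be a longest cycle and v a vertex off C; it is enough to find a cycle
   through v that is at least as long as C.
   If v has two neighbours a, b on C, split C into the arcs a P b and b Q a.
   When P (or Q) has at most one inner vertex, replace it by v. Otherwise let
   p1 p2 and q1 q2 be the first inner vertices of P and Q: a chord p1q1, p2q1
   or p1q2 reroutes C through v at the cost of at most one vertex, and without
   such a chord p1 p2 q2 q1 is an induced P4 or p1p2, q1q2 an induced 2K2.
   Otherwise v reaches some a on C by a path a Q v off C (an edge, or two edges
   through a neighbour of v when v has none on C, which exists by
   2K2-freeness), and 2-connectivity gives v another neighbour t. As v sees
   neither successor b, c of a on C, the graph has the edge tb or tc (else
   vt, bc is an induced 2K2), which closes the cycle v t b ... a Q or
   v t c ... a Q. *)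

From mathcomp Require Import all_boot zify.
Set Implicit Arguments. Unset Strict Implicit. Unset Printing Implicit Defensive.

Lemma uniq_count_le (T : eqType) (s t : seq T) :
  uniq s -> (forall x, count_mem x t <= count_mem x s) -> uniq t.
Proof.
move=> s_uniq le_ts; apply: count_mem_uniq => x.
have := le_ts x; rewrite (count_uniq_mem x s_uniq).
case: (boolP (x \in t)) => [xt | /count_memPn -> //].
have : 0 < count_mem x t by rewrite -has_count has_pred1.
by case: (x \in s); lia.
Qed.

Lemma cycle_cons_cat (T : Type) (e : rel T) x p y q :
  cycle e (x :: p ++ y :: q) = path e x (rcons p y) && path e y (rcons q x).
Proof. by rewrite /= rcons_cat rcons_cons cat_path rcons_path -andbA. Qed.

Lemma path_rcons_rev (T : Type) (e : rel T) x p y : symmetric e ->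
  path e x (rcons p y) -> path e y (rcons (rev p) x).
Proof.
move=> e_sym; have := rev_path e x (rcons p y).
rewrite last_rcons belast_rcons rev_cons => ->.
by rewrite (@eq_path _ _ e) // => a b; rewrite e_sym.
Qed.

Lemma connect_first_step (T : finType) (r : rel T) x y :
  connect r x y -> x != y -> exists z, r x z.
Proof.
case/connectP=> [[|z p]] /=; first by move=> _ ->; rewrite eqxx.
by case/andP=> rxz _ _ _; exists z.
Qed.

Lemma exists_third (T : finType) (a b : T) :
  2 < #|T| -> exists z, (z != a) && (z != b).
Proof.
move=> T_gt2; have : 0 < #|~: [set a; b]|.
  by have := cardsC [set a; b]; rewrite cards2; lia.
by case/card_gt0P=> z; rewrite !inE negb_or; exists z.
Qed.

Lemma del_vertex_path (T : finType) (e : rel T) u x p :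
  path (del_vertex e u) x p -> path e x p /\ u \notin p.
Proof.
elim: p x => //= y p IHp x /andP[/and3P[_ yNu exy] /IHp[pe uNp]].
by rewrite exy pe inE negb_or eq_sym yNu.
Qed.

Section LongCycles.

Variables (T : finType) (e : rel T).
Hypotheses (e_sym : symmetric e) (e_irr : irreflexive e).
Hypotheses (no_P4 : ~ has_induced_P4 e) (no_2K2 : ~ has_induced_2K2 e).

Lemma edge_neq x y : e x y -> x != y.
Proof. by apply: contraTneq => ->; rewrite e_irr. Qed.

Definition long_cycle_through (v : T) (n : nat) : Prop :=
  exists c, [/\ is_graph_cycle e c, v \in c & n <= size c].

Lemma is_graph_cycle_rot n c : is_graph_cycle e (rot n c) <-> is_graph_cycle e c.
Proof. by rewrite /is_graph_cycle size_rot rot_uniq rot_cycle. Qed.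

Lemma graph_cycle_rot_to c x : is_graph_cycle e c -> x \in c ->
  exists r, [/\ is_graph_cycle e (x :: r), size (x :: r) = size c & x :: r =i c].
Proof.
move=> c_cyc /rot_to[i r def_r]; exists r.
by rewrite -def_r size_rot; split=> //; [apply/is_graph_cycle_rot | apply: mem_rot].
Qed.

Lemma long_cycle_through_intro c v n :
  2 < n -> n <= size c -> uniq c -> cycle e c -> v \in c -> long_cycle_through v n.
Proof.
move=> n_gt2 n_le c_uniq c_cyc vc; exists c.
by split=> //; split=> //; apply: leq_trans n_le.
Qed.

Lemma long_cycle_through_detour a P b Q v :
  is_graph_cycle e (a :: P ++ b :: Q) -> v \notin a :: P ++ b :: Q ->
  e v a -> e v b -> size P <= 1 -> long_cycle_through v (size (a :: P ++ b :: Q)).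
Proof.
have W_uniq : uniq (v :: a :: P ++ b :: Q) -> uniq (b :: Q ++ [:: a; v]).
  by move/uniq_count_le; apply=> x; rewrite /= !count_cat /=; lia.
have W_size : size P <= 1 -> size (a :: P ++ b :: Q) <= size (b :: Q ++ [:: a; v]).
  by rewrite /= !size_cat /=; lia.
move=> [C_size C_uniq]; rewrite cycle_cons_cat => /andP[_ bQa] vNC va vb /W_size C_le.
apply: (long_cycle_through_intro C_size C_le); first by rewrite W_uniq //= vNC.
  by rewrite cycle_cons_cat bQa /= (e_sym a) va vb.
by rewrite !(inE, mem_cat) eqxx !orbT.
Qed.

Lemma long_cycle_through_chord a P0 p P b Q0 q Q v :
  is_graph_cycle e (a :: (P0 ++ p :: P) ++ b :: (Q0 ++ q :: Q)) ->
  v \notin a :: (P0 ++ p :: P) ++ b :: (Q0 ++ q :: Q) ->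
  e v a -> e v b -> e p q -> size P0 + size Q0 <= 1 ->
  long_cycle_through v (size (a :: (P0 ++ p :: P) ++ b :: (Q0 ++ q :: Q))).
Proof.
set C := a :: _; set W := p :: P ++ b :: v :: a :: rev (q :: Q).
have W_uniq : uniq (v :: C) -> uniq W.
  move/uniq_count_le; apply=> x.
  by rewrite /= !count_cat /= count_rev /= count_cat /=; lia.
have W_size : size P0 + size Q0 <= 1 -> size C <= size W.
  by rewrite /= !size_cat /= !size_cat /= size_rev /=; lia.
move=> [C_size C_uniq]; rewrite cycle_cons_cat !rcons_cat !cat_path /=.
move=> /andP[/and3P[_ _ pPb] /and3P[_ _ qQa]] vNC va vb pq /W_size C_le.
apply: (long_cycle_through_intro C_size C_le); first by rewrite W_uniq //= vNC.
  rewrite cycle_cons_cat pPb /= (e_sym b) vb va rev_cons rcons_path last_rcons.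
  by rewrite e_sym pq path_rcons_rev.
by rewrite !(inE, mem_cat) eqxx !orbT.
Qed.

Lemma long_cycle_through_two_cycle_neighbours a P b Q v :
  is_graph_cycle e (a :: P ++ b :: Q) -> v \notin a :: P ++ b :: Q ->
  e v a -> e v b -> long_cycle_through v (size (a :: P ++ b :: Q)).
Proof.
move=> C_cyc vNC va vb.
have [P_le1 | P_ge2] := leqP (size P) 1; first exact: long_cycle_through_detour.
have [Q_le1 | Q_ge2] := leqP (size Q) 1.
  have rotC : rot (size P).+1 (a :: P ++ b :: Q) = b :: Q ++ a :: P.
    exact: (rot_size_cat (a :: P)).
  have := long_cycle_through_detour (P := Q) (Q := P) _ _ vb va Q_le1.
  by rewrite -rotC size_rot mem_rot; apply=> //; apply/is_graph_cycle_rot.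
case: P P_ge2 C_cyc vNC => [|p1 [|p2 P]] // _.
case: Q Q_ge2 => [|q1 [|q2 Q]] // _.
have uniq_p12q12 :
    uniq (a :: (p1 :: p2 :: P) ++ b :: q1 :: q2 :: Q) -> uniq [:: p1; p2; q1; q2].
  by move/uniq_count_le; apply=> x; rewrite /= count_cat /=; lia.
move=> C_cyc vNC; have [_ /uniq_p12q12 p12q12_uniq _] := C_cyc.
have [p1q1 | p1Nq1] := boolP (e p1 q1).
  by apply: (@long_cycle_through_chord _ [::] _ _ _ [::]).
have [p2q1 | p2Nq1] := boolP (e p2 q1).
  by apply: (@long_cycle_through_chord _ [:: p1] _ _ _ [::]).
have [p1q2 | p1Nq2] := boolP (e p1 q2).
  by apply: (@long_cycle_through_chord _ [::] _ _ _ [:: q1]).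
case: C_cyc => _ _; rewrite cycle_cons_cat /=.
move=> /andP[/and3P[_ p1p2 _] /and3P[_ q1q2 _]].
have [p2q2 | p2Nq2] := boolP (e p2 q2).
  case: no_P4; exists p1, p2, q2, q1; split.
    rewrite (perm_uniq (_ : perm_eq _ [:: p1; p2; q1; q2])) //.
    by rewrite !perm_cons (perm_catC [:: q2]).
  by rewrite p1p2 p2q2 e_sym q1q2 p1Nq2 p2Nq1.
case: no_2K2; exists p1, p2, q1, q2; split => //.
by rewrite p1p2 q1q2 p1Nq1 p1Nq2 p2Nq1 p2Nq2.
Qed.

Lemma long_cycle_through_extension a b c R Q s t :
  is_graph_cycle e (a :: b :: c :: R) -> uniq (s :: t :: Q ++ a :: b :: c :: R) ->
  path e a (rcons Q s) -> e s t -> ~~ e s b -> ~~ e s c ->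
  long_cycle_through s (size (a :: b :: c :: R)).
Proof.
set U := s :: t :: _; set W := a :: rcons (rcons Q s) t.
have bcRW_uniq : uniq U -> uniq (b :: (c :: R) ++ W).
  by move/uniq_count_le; apply=> x; rewrite /= !count_cat /= -!cats1 !count_cat /=; lia.
have stbc_uniq : uniq U -> uniq [:: s; t; b; c].
  by move/uniq_count_le; apply=> x; rewrite /= !count_cat /=; lia.
have W_size : size (a :: b :: c :: R) <= size (c :: R ++ W).
  by rewrite /= size_cat /= !size_rcons; lia.
move=> [C_size _ C_cyc] U_uniq aQs st sNb sNc; move: C_cyc => /= /and3P[_ bc cRa].
have W_cyc x R' : e t x -> path e x (rcons R' a) -> cycle e (x :: R' ++ W).
  move=> tx xR'a; rewrite cycle_cons_cat xR'a rcons_path last_rcons rcons_path.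
  by rewrite last_rcons aQs st tx.
have sW : s \in W by rewrite !(inE, mem_rcons) eqxx !orbT.
have [tb | tNb] := boolP (e t b).
  apply: (long_cycle_through_intro C_size _ (bcRW_uniq U_uniq) (W_cyc _ _ tb _)).
  - by apply: leq_trans W_size _.
  - by rewrite /= bc.
  - by rewrite in_cons mem_cat sW !orbT.
have [tc | tNc] := boolP (e t c).
  have /andP[_ cRW_uniq] := bcRW_uniq U_uniq.
  apply: (long_cycle_through_intro C_size W_size cRW_uniq (W_cyc _ _ tc cRa)).
  by rewrite in_cons mem_cat sW !orbT.
case: no_2K2; exists s, t, b, c; split; first exact: stbc_uniq.
by rewrite st bc sNb sNc tNb tNc.
Qed.

Lemma edge_near_cycle C x y :
  is_graph_cycle e C -> x \notin C -> y \notin C -> e x y -> has (e x) C || has (e y) C.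
Proof.
case: C => [|c0 [|c1 C]] [// _ C_uniq C_cycle] xNC yNC xy.
have /andP[c0c1 _] := C_cycle.
apply: contraT => /norP[/hasPn xN /hasPn yN]; case: no_2K2; exists x, y, c0, c1; split.
  move: xNC yNC C_uniq; rewrite /= !inE !negb_or (edge_neq xy).
  by case/and3P=> -> -> _ /and3P[-> -> _] /andP[/andP[-> _] _].
by rewrite xy c0c1 !xN ?yN ?inE ?eqxx ?orbT.
Qed.

Lemma long_cycle_through_cycle_neighbour C v a w :
  is_graph_cycle e C -> v \notin C -> a \in C -> e v a -> e v w -> w != a ->
  long_cycle_through v (size C).
Proof.
move=> C_cyc vNC aC va vw wNa.
have [R [R_cyc <- R_mem]] := graph_cycle_rot_to C_cyc aC.
have vNR : v \notin a :: R by rewrite R_mem.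
have [/hasP[b bR vb] | /hasPn vN] := boolP (has (e v) R).
  case/splitPr: bR R_cyc vNR => P Q R_cyc vNR.
  exact: long_cycle_through_two_cycle_neighbours R_cyc vNR va vb.
have wNR : w \notin a :: R.
  by rewrite inE negb_or wNa; apply: contraL vw => /vN.
case: R R_cyc vNR wNR vN {R_mem} => [|b [|c R]] R_cyc; try by case: R_cyc.
move=> vNR wNR vN; have [_ R_uniq _] := R_cyc.
apply: (@long_cycle_through_extension a b c R [::] v w R_cyc) => //.
- rewrite cat0s (cons_uniq v) (cons_uniq w) in_cons negb_or (edge_neq vw).
  by rewrite vNR wNR R_uniq.
- by rewrite /= e_sym va.
- by rewrite vN ?inE ?eqxx.
- by rewrite vN ?inE ?eqxx ?orbT.
Qed.

Lemma long_cycle_through_no_cycle_neighbour C v w1 w2 :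
  is_graph_cycle e C -> v \notin C -> ~~ has (e v) C -> e v w1 -> e v w2 -> w1 != w2 ->
  long_cycle_through v (size C).
Proof.
move=> C_cyc vNC vNnbC vw1 vw2 w12; have /hasPn vN := vNnbC.
have w1NC : w1 \notin C by apply: contraL vw1 => /vN.
have w2NC : w2 \notin C by apply: contraL vw2 => /vN.
have /hasP[a aC w1a] : has (e w1) C.
  by move: (edge_near_cycle C_cyc vNC w1NC vw1); rewrite (negbTE vNnbC).
have [R [R_cyc <- R_mem]] := graph_cycle_rot_to C_cyc aC.
case: R R_cyc R_mem => [|b [|c R]] R_cyc; try by case: R_cyc.
move=> R_mem; have [_ R_uniq _] := R_cyc.
apply: (@long_cycle_through_extension a b c R [:: w1] v w2 R_cyc) => //.
- rewrite (cat_uniq [:: v; w2; w1]) has_sym R_uniq /= !R_mem !inE.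
  rewrite (negbTE vNC) (negbTE w1NC) (negbTE w2NC) (negbTE (edge_neq vw1)).
  by rewrite (negbTE (edge_neq vw2)) eq_sym w12.
- by rewrite /= e_sym w1a e_sym vw1.
- by rewrite vN // -R_mem !inE eqxx ?orbT.
- by rewrite vN // -R_mem !inE eqxx ?orbT.
Qed.

Lemma two_connected_two_neighbours u :
  two_connected e -> exists w1 w2, [/\ w1 != w2, e u w1 & e u w2].
Proof.
move=> [T_gt2 [conn conn_del]].
have [y /andP[yNu _]] := exists_third u u T_gt2; rewrite eq_sym in yNu.
have [w1 uw1] := connect_first_step (conn u y) yNu.
have [z /andP[zNu zNw1]] := exists_third u w1 T_gt2; rewrite eq_sym in zNu.
have [w2 /and3P[_ w2Nw1 uw2]] :=
  connect_first_step (conn_del w1 u z (edge_neq uw1) zNw1) zNu.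
by exists w1, w2; rewrite eq_sym w2Nw1.
Qed.

Lemma two_connected_has_cycle : two_connected e -> exists c, is_graph_cycle e c.
Proof.
move=> two_conn; have [T_gt2 [_ conn_del]] := two_conn.
have /card_gt0P[u _] : 0 < #|T| by apply: leq_trans T_gt2.
have [w1 [w2 [w12 uw1 uw2]]] := two_connected_two_neighbours u two_conn.
have w1Nu : w1 != u by rewrite eq_sym edge_neq.
have w2Nu : w2 != u by rewrite eq_sym edge_neq.
have /connectP[p p_path p_last] := conn_del u w1 w2 w1Nu w2Nu.
move: p_last; case/shortenP: p_path => {}p p_path p_uniq _ p_last.
have [p_e uNp] := del_vertex_path p_path.
exists (u :: w1 :: p); split.
- by case: p p_last {p_path p_uniq p_e uNp} => [/= w12' | //]; rewrite w12' eqxx in w12.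
- by rewrite (cons_uniq u) in_cons negb_or eq_sym w1Nu uNp p_uniq.
- by rewrite /= uw1 rcons_path p_e -p_last e_sym uw2.
Qed.

Lemma long_cycle_through_every_vertex C v :
  two_connected e -> is_graph_cycle e C -> long_cycle_through v (size C).
Proof.
move=> two_conn C_cyc; have [C_size C_uniq C_cycle] := C_cyc.
have [vC | vNC] := boolP (v \in C).
  exact: long_cycle_through_intro C_size _ C_uniq C_cycle vC.
have [w1 [w2 [w12 vw1 vw2]]] := two_connected_two_neighbours v two_conn.
have [/hasP[a aC va] | vNnbC] := boolP (has (e v) C); last first.
  exact: long_cycle_through_no_cycle_neighbour C_cyc vNC vNnbC vw1 vw2 w12.
have [w1a | w1Na] := eqVneq w1 a.
  by apply: long_cycle_through_cycle_neighbour C_cyc vNC aC va vw2 _; rewrite -w1a eq_sym.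
exact: long_cycle_through_cycle_neighbour C_cyc vNC aC va vw1 w1Na.
Qed.

End LongCycles.

(* Enumerating the cycles of length n as n-tuples makes the existence of such a
   cycle decidable, so that ex_maxn picks a longest one. *)
Lemma cummerbund_exists (T : finType) (e : rel T) :
  (exists c, is_graph_cycle e c) -> exists c, cummerbund e c.
Proof.
move=> [c0 c0_cyc].
pose has_cycle_of n := [exists c : n.-tuple T, [&& 2 < n, uniq c & cycle e c]].
have cycle_of c : is_graph_cycle e c -> has_cycle_of (size c).
  by case=> *; apply/existsP; exists (in_tuple c); apply/and3P.
have size_le n : has_cycle_of n -> n <= #|T|.
  case/existsP=> c /and3P[_ /card_uniqP c_card _].
  by rewrite -(size_tuple c) -c_card max_card.
case: (ex_maxnP (ex_intro has_cycle_of _ (cycle_of c0 c0_cyc)) size_le).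
move=> n /existsP[c /and3P[n_gt2 c_uniq c_cyc]] n_max.
exists c; split; first by split; rewrite ?size_tuple.
by move=> c' /cycle_of /n_max; rewrite size_tuple.
Qed.

Theorem theorem12 (T : finType) (e : rel T) :
  simple_graph e -> two_connected e ->
  ~ has_induced_P4 e -> ~ has_induced_2K2 e ->
  cummerbund_covered e.
Proof.
move=> [e_sym e_irr] two_conn no_P4 no_2K2 v.
have [C [C_cyc C_max]] :=
  cummerbund_exists (two_connected_has_cycle e_sym e_irr two_conn).
have [c [c_cyc vc C_le_c]] :=
  long_cycle_through_every_vertex e_sym e_irr no_P4 no_2K2 v two_conn C_cyc.
by exists c; split=> //; split=> // c' /C_max /leq_trans; apply.
Qed.
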